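(* Let $n,m\ge 1$, let $A=(a_1,\ldots,a_m)$ be a real $n\times m$ matrix with $a_i\neq 0$ for all $i$, and let $b=(b_1,\ldots,b_m)^\top\in\mathbb{R}^m$ be such that $K=\{x\in\mathbb{R}^n \mid A^\top x\le b\}$ is nonempty. For $\varepsilon\ge 0$ put $b_i(\varepsilon)=b_i+\varepsilon^i$ (so $b_i(0)=b_i$), $H_i(\varepsilon)=\{x\mid a_i^\top x\le b_i(\varepsilon)\}$, $\partial H_i(\varepsilon)=\{x\mid a_i^\top x= b_i(\varepsilon)\}$, $K(\varepsilon)=\bigcap_{i=1}^m H_i(\varepsilon)$, $F_i(\varepsilon)=\partial H_i(\varepsilon)\cap K(\varepsilon)$, and $\mathcal{F}(\varepsilon)=\{J\subseteq\{1,\ldots,m\}\mid J\neq\emptyset,\ \bigcap_{i\in J}F_i(\varepsilon)\neq\emptyset\}$. Let $\mathcal{F}=\mathcal{F}(0)$, and let $\mathcal{F}(0+)$ denote the common value of $\mathcal{F}(\varepsilon)$ for all sufficiently small $\varepsilon>0$ (which is known to exist). Then $\mathcal{F}\supseteq\mathcal{F}(0+)$; consequently $|\mathcal{F}|\ge|\mathcal{F}(0+)|$. *)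

From HB Require Import structures.
From mathcomp Require Import all_boot all_order all_algebra.
From mathcomp Require Import boolp reals.
Set Implicit Arguments. Unset Strict Implicit. Unset Printing Implicit Defensive.
Import Order.TTheory GRing.Theory Num.Theory.
Local Open Scope ring_scope.

(* Perturbed right-hand side b_i(eps) = b_i + eps^i, with paper index i = val i + 1
   (ordinals 'I_m are 0-based). *)
Definition beps (R : realType) (m : nat) (b : 'cV[R]_m) (eps : R) (i : 'I_m) : R :=
  b i 0 + eps ^+ i.+1.

Definition inK (R : realType) (n m : nat) (A : 'M[R]_(n, m)) (b : 'cV[R]_m)
  (eps : R) (x : 'cV[R]_n) : Prop :=
  forall i : 'I_m, (A^T *m x) i 0 <= beps b eps i.

Definition inFace (R : realType) (n m : nat) (A : 'M[R]_(n, m)) (b : 'cV[R]_m)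
  (eps : R) (i : 'I_m) (x : 'cV[R]_n) : Prop :=
  (A^T *m x) i 0 = beps b eps i /\ inK A b eps x.

Definition faceFam (R : realType) (n m : nat) (A : 'M[R]_(n, m)) (b : 'cV[R]_m)
  (eps : R) : {set {set 'I_m}} :=
  [set J : {set 'I_m} | (J != set0) &&
     `[< exists x : 'cV[R]_n, forall i, i \in J -> inFace A b eps i x >]].

(* If J is in F(0+), the system  A^T x <= b,  a_i^T x >= b_i (i in J)
   becomes feasible once every right-hand side is relaxed by an arbitrary
   eps > 0: take a point of the intersection of the faces F_i(e) for a small
   e, since e^i <= e <= eps.  Feasibility of a finite linear system survives
   this limit: eliminating one variable by Fourier-Motzkin yields an
   equivalent system in fewer variables whose right-hand sides are
   nonnegative combinations of the old ones, so the relaxation persists and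
   everything reduces to  0 <= c + eps w  for all eps > 0. *)
From HB Require Import structures.
From mathcomp Require Import all_boot all_order all_algebra.
From mathcomp Require Import boolp reals.
From mathcomp Require Import ring lra.
Set Implicit Arguments. Unset Strict Implicit. Unset Printing Implicit Defensive.
Import Order.TTheory GRing.Theory Num.Theory.
Local Open Scope ring_scope.

Lemma exists_between_seq (R : realDomainType) (L U : seq R) :
  (forall l u, l \in L -> u \in U -> l <= u) ->
  exists t, (forall l, l \in L -> l <= t) /\ (forall u, u \in U -> t <= u).
Proof.
elim: L => [|l L IH] leLU.
  clear leLU; elim: U => [|u U [t [_ leU]]]; first by exists 0; split.
  exists (Num.min t u); split=> // v; rewrite inE => /orP[/eqP->|/leU].
    by rewrite ge_min lexx orbT.
  by rewrite ge_min => ->.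
have [t [leL leU]] : exists t, (forall l, l \in L -> l <= t) /\
                               (forall u, u \in U -> t <= u).
  by apply: IH => l' u hl hu; rewrite leLU // inE hl orbT.
exists (Num.max t l); split=> [l'|u hu].
  by rewrite inE le_max => /orP[/eqP->|/leL->]; rewrite ?lexx ?orbT.
by rewrite ge_max leU //= leLU ?mem_head.
Qed.

Lemma ge0_relaxed (R : realFieldType) (c w : R) : 0 <= w ->
  (forall eps, 0 < eps -> 0 <= c + eps * w) -> 0 <= c.
Proof.
move=> w_ge0 relax; rewrite leNgt; apply/negP => c_lt0.
have eps_gt0 : 0 < - c / (w + 1) by apply: divr_gt0; lra.
have := relax _ eps_gt0.
have -> : c + - c / (w + 1) * w = c / (w + 1) by field; lra.
by rewrite pmulr_lge0 ?invr_gt0; lra.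
Qed.

Section FourierMotzkin.
Variables (R : realFieldType) (I : finType) (l : I -> R).

(* Eliminating t from the constraints  v_k + l_k t <= c_k  keeps those with
   l_k = 0 and combines each pair with l_p > 0 > l_q so that t cancels; the
   remaining indices give the trivial combination 0. *)
Definition fm_comb (v : I -> R) (z : I + I * I) : R :=
  match z with
  | inl k => if l k == 0 then v k else 0
  | inr (p, q) => if (0 < l p) && (l q < 0) then l p * v q - l q * v p else 0
  end.

Lemma fm_comb_affine (c w : I -> R) (e : R) z :
  fm_comb (fun k => c k + e * w k) z = fm_comb c z + e * fm_comb w z.
Proof. by case: z => [k|[p q]] /=; case: ifP => _; ring. Qed.

Lemma fm_comb_sum n (v : I -> 'I_n -> R) (x : 'I_n -> R) z :
  \sum_j fm_comb (v^~ j) z * x j = fm_comb (fun k => \sum_j v k j * x j) z.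
Proof.
case: z => [k|[p q]] /=; case: ifP => // _; try by rewrite big1 // => j _; rewrite mul0r.
by rewrite !mulr_sumr -sumrB; apply: eq_bigr => j _; ring.
Qed.

Lemma fm_elimP (s c : I -> R) :
  (exists t, forall k, s k + l k * t <= c k) <->
  (forall z, fm_comb s z <= fm_comb c z).
Proof.
split=> [[t le_sc] [k|[p q]] /=|le_comb].
- by case: ifP => [/eqP l0|_]; rewrite ?lexx //; have := le_sc k; rewrite l0; lra.
- case: ifP => [/andP[lp_gt0 lq_lt0]|_]; rewrite ?lexx //.
  have := le_sc p; have := le_sc q; nra.
pose lo := [seq (c q - s q) / l q | q <- enum I & l q < 0].
pose up := [seq (c p - s p) / l p | p <- enum I & 0 < l p].
have divK k : l k != 0 -> l k * ((c k - s k) / l k) = c k - s k.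
  by move=> lk0; rewrite mulrC divfK.
have [t [le_lo le_up]] : exists t, (forall x, x \in lo -> x <= t) /\
                                   (forall x, x \in up -> t <= x).
  apply: exists_between_seq => _ _ /mapP[q] + -> /mapP[p] +->.
  rewrite !mem_filter => /andP[lq_lt0 _] /andP[lp_gt0 _].
  have := le_comb (inr (p, q)); rewrite /= lp_gt0 lq_lt0 /=.
  have := divK q (ltr0_neq0 lq_lt0); have := divK p (lt0r_neq0 lp_gt0).
  have : 0 < l p * - l q by apply: mulr_gt0; lra.
  set xp := _ / l p; set xq := _ / l q; nra.
exists t => k; have [lk_lt0|lk_gt0|lk0] := ltrgtP (l k) 0.
- have : (c k - s k) / l k <= t.
    by apply: le_lo; apply/mapP; exists k; rewrite // mem_filter lk_lt0 mem_enum.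
  have := divK k (ltr0_neq0 lk_lt0); set x := _ / l k; nra.
- have : t <= (c k - s k) / l k.
    by apply: le_up; apply/mapP; exists k; rewrite // mem_filter lk_gt0 mem_enum.
  have := divK k (lt0r_neq0 lk_gt0); set x := _ / l k; nra.
- by have := le_comb (inl k); rewrite /= lk0 eqxx mul0r addr0.
Qed.

Lemma fm_comb_ge0 (w : I -> R) z : (forall k, 0 <= w k) -> 0 <= fm_comb w z.
Proof.
move=> w_ge0; have <- : fm_comb (fun=> 0) z = 0.
  by case: z => [k|[p q]] /=; case: ifP => _; ring.
by move: z; apply/fm_elimP; exists 0 => k; rewrite mulr0 addr0.
Qed.

End FourierMotzkin.

Definition feasible (R : realFieldType) (I : finType) n
    (a : I -> 'I_n -> R) (c : I -> R) : Prop :=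
  exists x : 'I_n -> R, forall k, \sum_j a k j * x j <= c k.

Lemma feasible_relaxed (R : realFieldType) (I : finType) n
    (a : I -> 'I_n -> R) (c w : I -> R) :
  (forall k, 0 <= w k) ->
  (forall eps, 0 < eps -> feasible a (fun k => c k + eps * w k)) ->
  feasible a c.
Proof.
elim: n I a c w => [|n IH] I a c w w_ge0 relax.
  exists (fun=> 0) => k; rewrite big_ord0.
  by apply: (ge0_relaxed (w_ge0 k)) => eps /relax[x /(_ k)]; rewrite big_ord0.
pose l k := a k ord_max; pose a' k j := a k (lift ord_max j).
have sum_split x k : \sum_j a k j * x j =
    \sum_j a' k j * x (lift ord_max j) + l k * x ord_max.
  rewrite big_ord_recr; congr (_ + _); apply: eq_bigr => j _.
  by have -> : widen_ord (leqnSn n) j = lift ord_max j by apply/val_inj/esym/lift_max.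
have [x' sol'] : feasible (fun z j => fm_comb l (a'^~ j) z) (fm_comb l c).
  apply: (IH _ _ _ (fm_comb l w)) => [z|eps /relax[x sol]].
    exact: fm_comb_ge0.
  exists (fun j => x (lift ord_max j)) => z; rewrite fm_comb_sum -fm_comb_affine.
  by move: z; apply/fm_elimP; exists (x ord_max) => k; rewrite -sum_split.
have /fm_elimP[t solt] : forall z,
    fm_comb l (fun k => \sum_j a' k j * x' j) z <= fm_comb l c z.
  by move=> z; rewrite -fm_comb_sum.
exists (fun j => if unlift ord_max j is Some j' then x' j' else t) => k.
rewrite sum_split unlift_none; under eq_bigr => j _ do rewrite liftK.
exact: solt.
Qed.

Lemma mulmx_trmx_coef (R : pzRingType) n m (A : 'M[R]_(n, m)) (x : 'cV[R]_n) i :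
  (A^T *m x) i 0 = \sum_j A j i * x j 0.
Proof. by rewrite mxE; apply: eq_bigr => j _; rewrite !mxE. Qed.

Lemma faceFam0_of_small_eps (R : realType) n m (A : 'M[R]_(n, m))
    (b : 'cV[R]_m) (J : {set 'I_m}) :
  (forall eps, 0 < eps -> exists2 e, 0 < e <= eps & J \in faceFam A b e) ->
  J \in faceFam A b 0.
Proof.
move=> small.
have J0 : J != set0 by have [e _] := small 1 ltr01; rewrite inE => /andP[].
pose a z j := match z with
  | inl i => A j i | inr i => if i \in J then - A j i else 0 end.
pose c z := match z with
  | inl i => b i 0 | inr i => if i \in J then - b i 0 else 0 end.
have [x sol] : feasible a c.
  apply: (@feasible_relaxed _ _ _ _ _ (fun=> 1)) => [_|eps eps_gt0].
    exact: ler01.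
  have [e /andP[e_gt0 le_e]] : exists2 e, 0 < e <= Num.min eps 1 &
      J \in faceFam A b e by apply: small; rewrite lt_min eps_gt0 ltr01.
  rewrite inE J0 => /asboolP[x face].
  have /andP[le_e_eps le_e1] : (e <= eps) && (e <= 1) by rewrite -le_min.
  have pow_le i : e ^+ i.+1 <= eps.
    apply: (le_trans _ le_e_eps); rewrite -[leRHS]expr1.
    exact: (ler_wiXn2l (ltW e_gt0) le_e1 (ltn0Sn i)).
  have xK : inK A b e x by case/set0Pn: J0 => i /face[].
  exists (fun j => x j 0) => -[i|i] /=.
    by have := xK i; rewrite /beps mulmx_trmx_coef; have := pow_le i; lra.
  case: ifP => iJ; last by rewrite big1 ?mulr1 ?add0r ?ltW // => j _; rewrite mul0r.
  have [+ _] := face i iJ; rewrite /beps mulmx_trmx_coef.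
  under [X in _ -> X <= _]eq_bigr do rewrite mulNr.
  rewrite sumrN; have := exprn_ge0 i.+1 (ltW e_gt0); lra.
have coefE i : (A^T *m \col_j x j) i 0 = \sum_j A j i * x j.
  by rewrite mulmx_trmx_coef; apply: eq_bigr => j _; rewrite mxE.
have beps0 i : beps b 0 i = b i 0 by rewrite /beps expr0n addr0.
have xK : inK A b 0 (\col_j x j) by move=> i; rewrite coefE beps0; exact: sol (inl i).
rewrite inE J0; apply/asboolP; exists (\col_j x j) => i iJ; split=> //.
rewrite coefE beps0; apply/eqP; rewrite eq_le (sol (inl i)) /= -lerN2 -sumrN.
have := sol (inr i); rewrite /= iJ.
by under eq_bigr do rewrite mulNr.
Qed.

Theorem lemma2 (R : realType) (n m : nat) (A : 'M[R]_(n, m)) (b : 'cV[R]_m)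
    (F0plus : {set {set 'I_m}}) :
  (0 < n)%N -> (0 < m)%N ->
  (forall i : 'I_m, col i A != 0) ->
  (exists x : 'cV[R]_n, inK A b 0 x) ->
  (exists2 d : R, 0 < d & forall eps : R, 0 < eps -> eps < d ->
      faceFam A b eps = F0plus) ->
  F0plus \subset faceFam A b 0 /\ (#|F0plus| <= #|faceFam A b 0|)%N.
Proof.
move=> _ _ _ _ [d d_gt0 F0plusE].
suff sub : F0plus \subset faceFam A b 0 by split; last exact: subset_leq_card.
apply/subsetP => J JF; apply: faceFam0_of_small_eps => eps eps_gt0.
have e_gt0 : 0 < Num.min eps (d / 2) by rewrite lt_min eps_gt0 /=; lra.
exists (Num.min eps (d / 2)); first by rewrite e_gt0 ge_min lexx.
by rewrite F0plusE // gt_min; apply/orP; right; lra.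
Qed.
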